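(* Let $K_{m_1,m_2}$ be the complete bipartite graph with bipartition $(X,Y)$, $X=\{x_1,\dots,x_{m_1}\}$, $Y=\{y_1,\dots,y_{m_2}\}$, where $2\le m_1\le m_2$. Let $s$ and $i$ be integers with $\max\{1,s-m_2\}\le i\le \min\{m_1,s-1\}$, and let $S_i=\{x_1,\dots,x_i,y_1,\dots,y_{s-i}\}$. If $s\le m_2-m_1+2$, then $\kappa^*_{K_{m_1,m_2}}(S_i)=m_1$.
   Context: For $S\subseteq V(G)$ with $|S|\ge 2$, an $S$-Steiner tree of $G$ is a subtree $T$ of $G$ with $S\subseteq V(T)$ all of whose leaves belong to $S$. A family of $S$-Steiner trees $T_1,\dots,T_k$ is completely independent if for all $1\le p<q\le k$: $E(T_p)\cap E(T_q)=\emptyset$, $V(T_p)\cap V(T_q)=S$, and for any two vertices $x_1,x_2\in S$ the $(x_1,x_2)$-paths in $T_p$ and in $T_q$ are internally disjoint. $\kappa^*_G(S)$ is the maximum number of trees in a completely independent family of $S$-Steiner trees in $G$. *)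

From mathcomp Require Import all_boot.
Set Implicit Arguments. Unset Strict Implicit. Unset Printing Implicit Defensive.

Section Graphs.
Variables (V : finType) (adj : rel V).

(* A simple graph on V is given by a symmetric irreflexive relation adj.
   A subgraph T = (VT, ET): vertex set VT, edge set ET, edges are 2-sets. *)
Record subgr := Subgr { sg_V : {set V}; sg_E : {set {set V}} }.

Definition is_subgraph (T : subgr) : Prop :=
  forall e, e \in sg_E T ->
    exists u v, [/\ e = [set u; v], adj u v, u \in sg_V T & v \in sg_V T].

Definition tadj (T : subgr) : rel V := fun a b => (a != b) && ([set a; b] \in sg_E T).

(* p is (the vertex list after x of) a path from x to y in T *)
Definition is_tpath (T : subgr) (x y : V) (p : seq V) : bool :=
  [&& x \in sg_V T, path (tadj T) x p, uniq (x :: p) & last x p == y].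

Definition connected_sg (T : subgr) : Prop :=
  forall u v, u \in sg_V T -> v \in sg_V T -> exists p, is_tpath T u v p.

Definition acyclic_sg (T : subgr) : Prop :=
  ~ exists v0 p, [/\ 2 <= size p, v0 \in sg_V T, path (tadj T) v0 p,
                     uniq (v0 :: p) & tadj T (last v0 p) v0].

Definition is_tree (T : subgr) : Prop :=
  [/\ is_subgraph T, sg_V T != set0, connected_sg T & acyclic_sg T].

Definition is_leaf (T : subgr) (v : V) : bool :=
  (v \in sg_V T) && (#|[set e in sg_E T | v \in e]| == 1).

Definition steiner_tree (S : {set V}) (T : subgr) : Prop :=
  [/\ is_tree T, S \subset sg_V T & forall v, is_leaf T v -> v \in S].

Definition internal (x y : V) (p : seq V) : seq V :=
  [seq v <- x :: p | (v != x) && (v != y)].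

Definition completely_independent (S : {set V}) (k : nat) (F : 'I_k -> subgr) : Prop :=
  (forall j, steiner_tree S (F j)) /\
  forall jp jq : 'I_k, jp != jq ->
    [/\ [disjoint sg_E (F jp) & sg_E (F jq)],
        sg_V (F jp) :&: sg_V (F jq) = S &
        forall x1 x2, x1 \in S -> x2 \in S ->
          forall p q, is_tpath (F jp) x1 x2 p -> is_tpath (F jq) x1 x2 q ->
            [disjoint [pred v | v \in internal x1 x2 p]
                    & [pred v | v \in internal x1 x2 q]]].

Definition kappa_star_eq (S : {set V}) (k : nat) : Prop :=
  (exists F : 'I_k -> subgr, completely_independent S F) /\
  forall k' (F : 'I_k' -> subgr), completely_independent S F -> k' <= k.

End Graphs.

(* complete bipartite graph K_{m1,m2}: X = inl 'I_m1, Y = inr 'I_m2 *)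
Definition KV (m1 m2 : nat) : finType := ('I_m1 + 'I_m2)%type.

Definition Kadj (m1 m2 : nat) : rel (KV m1 m2) := fun u v =>
  match u, v with
  | inl _, inr _ | inr _, inl _ => true
  | _, _ => false
  end.

(* S_i = {x_1..x_i, y_1..y_{s-i}} (0-based indices) *)
Definition S_set (m1 m2 s i : nat) : {set KV m1 m2} :=
  [set v : KV m1 m2 | match v with
                       | inl a => a < i
                       | inr b => b < s - i
                       end].
Arguments Kadj : clear implicits.
Arguments S_set : clear implicits.

(* Upper bound: in each tree of a completely independent family the path from
   y_1 to x_1 leaves y_1 through an edge of that tree, and edge-disjointness
   makes these edges distinct, so there are at most deg y_1 = m1 trees.
   Lower bound: the tree T_j is the star from x_j to the vertices of S_i in Y,
   together with a private vertex w_j of Y outside S_i joined to x_j and to the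
   vertices of S_i in X.  Every inner vertex of a path of T_j is x_j or w_j, and
   these pairs are disjoint for distinct j, so the trees are completely
   independent; s <= m2 - m1 + 2 is what leaves room in Y for the m1 vertices w_j. *)

From mathcomp Require Import all_boot zify.
Set Implicit Arguments. Unset Strict Implicit. Unset Printing Implicit Defensive.

Lemma set2_eq_cases (T : finType) (a b u v : T) :
  [set a; b] = [set u; v] -> (a = u /\ b = v) \/ (a = v /\ b = u).
Proof.
move=> E.
have b_uv : b \in [set u; v] by rewrite -E set22.
have u_ab : u \in [set a; b] by rewrite E set21.
have v_ab : v \in [set a; b] by rewrite E set22.
have /set2P[au|av] : a \in [set u; v] by rewrite -E set21.
- by left; case/set2P: b_uv v_ab => -> //; rewrite -au => /set2P[] ->.
- by right; case/set2P: b_uv u_ab => -> //; rewrite -av => /set2P[] ->.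
Qed.

Lemma path_inner_neighbours (T : eqType) (e : rel T) x p v :
  path e x p -> uniq (x :: p) -> v \in p -> v != last x p ->
  exists u w, [/\ e u v, e v w & u != w].
Proof.
elim: p x => [//|a p IHp] x /= /andP[exa pa] /andP[xNap up].
case: (eqVneq v a) => [-> _ | vNa]; last by rewrite inE (negbTE vNa); exact: IHp.
case: p pa up xNap {IHp} => [|b p] /=; first by rewrite eqxx.
case/andP=> eab _ _; rewrite !inE negb_or => /andP[_ /norP[xNb _]] _.
by exists x, b.
Qed.

Lemma internal_neighbours (V : finType) (T : subgr V) x y p v :
  is_tpath T x y p -> v \in internal x y p ->
  exists u w, [/\ tadj T u v, tadj T v w & u != w].
Proof.
case/and4P=> _ pp up /eqP lp; rewrite mem_filter inE => /andP[/andP[vNx vNy]].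
rewrite (negbTE vNx) /= => vp.
by apply: path_inner_neighbours pp up vp _; rewrite lp.
Qed.

Section RelSubgraph.
Variables (V : finType) (r : rel V).
Hypotheses (r_sym : symmetric r) (r_irr : irreflexive r).

Definition rel_subgr (A : {set V}) : subgr V :=
  Subgr A [set [set u; v] | u in [set: V], v in r u].

Lemma rel_subgr_edgeE A u v : ([set u; v] \in sg_E (rel_subgr A)) = r u v.
Proof.
apply/imset2P/idP => [[a b _ rab /set2_eq_cases[[-> ->]|[-> ->]]] | ruv] //.
  by rewrite r_sym.
by exists u v.
Qed.

Lemma tadj_rel_subgr A : tadj (rel_subgr A) =2 r.
Proof.
move=> u v; rewrite /tadj rel_subgr_edgeE andbC.
by case: (eqVneq u v) => [->|_]; rewrite ?r_irr ?andbT.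
Qed.

Lemma rel_subgr_subgraph (adj : rel V) (A : {set V}) :
  subrel r adj -> (forall u v, r u v -> u \in A) -> is_subgraph adj (rel_subgr A).
Proof.
move=> r_adj rA e /imset2P[u v _ ruv ->]; exists u, v.
by split; [| exact: r_adj | exact: rA ruv | apply: (rA _ u); rewrite r_sym].
Qed.

Lemma rel_subgr_connected (A : {set V}) c :
  (forall v, v \in A -> connect r c v) -> connected_sg (rel_subgr A).
Proof.
move=> Ac u v uA vA.
have /connectP[p pp ->] : connect r u v.
  by apply: connect_trans (Ac v vA); rewrite sym_connect_sym //; exact: Ac.
case: (shortenP pp) => q qp qu _; exists q.
by rewrite /is_tpath uA (eq_path (tadj_rel_subgr A)) qp qu eqxx.
Qed.

Lemma rel_subgr_not_leaf A u v w :
  r u v -> r v w -> u != w -> ~~ is_leaf (rel_subgr A) v.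
Proof.
move=> ruv rvw uNw; rewrite /is_leaf gtn_eqF ?andbF //.
apply/card_gt1P; exists [set u; v], [set w; v].
rewrite !inE !rel_subgr_edgeE ruv -r_sym rvw !eqxx !orbT; split=> //.
apply: contraNneq uNw => E; have /set2P[-> // | uv] : u \in [set w; v] by rewrite -E set21.
by move: ruv; rewrite uv r_irr.
Qed.

Variable B : {set V}.
Hypothesis branching_in : forall u v w, r u v -> r v w -> u != w -> v \in B.

Lemma rel_subgr_internal A x y p :
  is_tpath (rel_subgr A) x y p -> {subset internal x y p <= B}.
Proof.
move=> xyp v /(internal_neighbours xyp)[u [w []]].
rewrite !tadj_rel_subgr; exact: branching_in.
Qed.

(* A cycle v0, a, b, ... has three distinct vertices with two distinct neighbours. *)
Lemma rel_subgr_acyclic A : #|B| <= 2 -> acyclic_sg (rel_subgr A).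
Proof.
rewrite leqNgt => /card_gt2P; apply: contra_not.
case=> v0 [[|a [|b q]] [//= _ _]].
rewrite (eq_path (tadj_rel_subgr A)) /= !tadj_rel_subgr inE negb_or.
move=> /and3P[rv0a rab rbq] /and3P[/andP[v0Na v0Nbq] aNbq _] rlv0.
have aNlast : last b q != a by apply: contraNneq aNbq => <-; exact: mem_last.
have v0Nb : b != v0 by apply: contraNneq v0Nbq => ->; exact: mem_head.
have aNb : a != b by apply: contraNneq aNbq => ->; exact: mem_head.
exists v0, a, b; split; split=> //.
- exact: branching_in rlv0 rv0a aNlast.
- by apply: (branching_in rv0a rab); rewrite eq_sym.
- case: q rbq rlv0 aNbq {aNlast v0Nbq} => [_ rbv0 _ | c q /= /andP[rbc _] _].
    by apply: (branching_in rab rbv0); rewrite eq_sym.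
  by rewrite !inE negb_or => /andP[_ /norP[aNc _]]; exact: branching_in rab rbc aNc.
Qed.

Lemma rel_subgr_steiner (adj : rel V) (S A : {set V}) c :
  subrel r adj -> (forall u v, r u v -> u \in A) -> S \subset A -> c \in A ->
  (forall v, v \in A -> connect r c v) -> #|B| <= 2 ->
  (forall v, v \in A -> v \notin S -> exists u w, [/\ r u v, r v w & u != w]) ->
  steiner_tree adj S (rel_subgr A).
Proof.
move=> r_adj rA SA cA Ac cardB branchNS; split=> //.
- split; [exact: rel_subgr_subgraph | by apply/set0Pn; exists c |
          exact: rel_subgr_connected Ac | exact: rel_subgr_acyclic].
- move=> v /andP[vA leaf_v]; apply: contraT => vNS.
  have [u [w [ruv rvw uNw]]] := branchNS v vA vNS.
  by have := rel_subgr_not_leaf A ruv rvw uNw; rewrite /is_leaf vA leaf_v.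
Qed.

End RelSubgraph.

Lemma rel_subgr_family_ci (V : finType) (adj : rel V) (S : {set V}) k
    (r : 'I_k -> rel V) (B : 'I_k -> {set V}) :
  (forall j, symmetric (r j)) -> (forall j, irreflexive (r j)) ->
  (forall j u v w, r j u v -> r j v w -> u != w -> v \in B j) ->
  (forall j, steiner_tree adj S (rel_subgr (r j) (S :|: B j))) ->
  (forall j l, j != l -> [disjoint B j & B l]) ->
  (forall j l u v, j != l -> r j u v -> ~~ r l u v) ->
  completely_independent adj S (fun j => rel_subgr (r j) (S :|: B j)).
Proof.
move=> r_sym r_irr branching_in steiner B_disj r_disj; split=> // j l jNl; split.
- rewrite -setI_eq0; apply/set0Pn => -[_ /setIP[/imset2P[u v _ ruv ->]]].
  by rewrite (rel_subgr_edgeE (r_sym l)); apply/negP; exact: r_disj jNl ruv.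
- by rewrite /rel_subgr /= -setUIr (disjoint_setI0 (B_disj j l jNl)) setU0.
- move=> x1 x2 _ _ p q xp xq.
  apply: (disjointW _ _ (B_disj j l jNl)); apply/subsetP.
  + exact: (rel_subgr_internal (r_sym j) (r_irr j) (branching_in j) xp).
  + exact: (rel_subgr_internal (r_sym l) (r_irr l) (branching_in l) xq).
Qed.

Lemma ci_card_le_degree (V : finType) (adj : rel V) (S : {set V}) k
    (F : 'I_k -> subgr V) x y :
  symmetric adj -> x \in S -> y \in S -> x != y ->
  completely_independent adj S F -> k <= #|[set v | adj y v]|.
Proof.
move=> adj_sym xS yS xNy [steiner indep].
have edge_at_y j : exists a, adj y a && ([set y; a] \in sg_E (F j)).
  have [[sub _ conn _] SV _] := steiner j.
  have [[|a p] /and4P[_ /= yap _ /eqP lx]] := conn y x (subsetP SV y yS) (subsetP SV x xS).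
    by rewrite lx eqxx in xNy.
  have /andP[/andP[_ ya] _] := yap; have [u [v [E uv _ _]]] := sub _ ya.
  exists a; rewrite ya andbT.
  by case: (set2_eq_cases E) uv => -[-> ->] //; rewrite adj_sym.
have [f fP] := fin_all_exists edge_at_y.
have f_inj : injective f.
  move=> j l fjl; apply/eqP; apply: contraT => jNl.
  have [E_disj _ _] := indep j l jNl.
  by have := disjointFr E_disj (andP (fP j)).2; rewrite fjl (andP (fP l)).2.
rewrite -[k]card_ord -cardsT -(card_imset _ f_inj).
by apply/subset_leq_card/subsetP => _ /imsetP[j _ ->]; rewrite inE; case/andP: (fP j).
Qed.

Lemma ord_eqE n (a b : 'I_n) : (a == b) = (a == b :> nat).
Proof. by []. Qed.

Lemma inl_eqE (A B : eqType) (a a' : A) : (inl a == inl a' :> A + B) = (a == a').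
Proof. by []. Qed.

Lemma inr_eqE (A B : eqType) (b b' : B) : (inr b == inr b' :> A + B) = (b == b').
Proof. by []. Qed.

Lemma Kadj_sym m1 m2 : symmetric (Kadj m1 m2).
Proof. by case=> ? []. Qed.

Lemma card_Kadj_inr m1 m2 (b : 'I_m2) : #|[set v | Kadj m1 m2 (inr b) v]| = m1.
Proof.
have -> : [set v | Kadj m1 m2 (inr b) v] = inl @: [set: 'I_m1].
  by apply/setP => -[a|c]; rewrite !inE /=; [rewrite imset_f | apply/esym/imsetP => -[]].
by rewrite card_imset ?cardsT ?card_ord //; exact: inl_inj.
Qed.

Section CompleteBipartiteTrees.
Variables m1 m2 s i : nat.
Hypotheses (m1_ge2 : 2 <= m1) (m1_le_m2 : m1 <= m2) (i_gt0 : 0 < i) (i_lt_s : i <= s - 1)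
           (s_le : s <= m2 - m1 + 2).

Local Notation V := (KV m1 m2).
Local Notation S := (S_set m1 m2 s i).

(* With 0-based indices, the tree T_j is the star joining x_j to the vertices
   of S in Y, plus the apex w_j = y_(s+j-2), outside S and different for each
   j, joined to x_j and to the vertices of S in X.  When i + j < 2, i.e. i = 1
   and j = 0, x_j is the only vertex of S in X and the apex is omitted. *)
Definition is_apex (j b : nat) : bool := (2 <= i + j) && (b == s + j - 2).

Definition tree_edge (j a b : nat) : bool :=
  ((a == j) && (b < s - i)) || (is_apex j b && ((a < i) || (a == j))).

Definition tree_rel (j : nat) : rel V := fun u v =>
  match u, v with
  | inl a, inr b | inr b, inl a => tree_edge j a b
  | _, _ => false
  end.

Definition tree_hub (j : 'I_m1) : {set V} :=
  [set v : V | (v == inl j) || (if v is inr b then is_apex j b else false)].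

Lemma tree_rel_sym j : symmetric (tree_rel j).
Proof. by case=> ? []. Qed.

Lemma tree_rel_irr j : irreflexive (tree_rel j).
Proof. by case. Qed.

Lemma tree_rel_Kadj j : subrel (tree_rel j) (Kadj m1 m2).
Proof. by case=> ? []. Qed.

Lemma tree_rel_branching (j : 'I_m1) u v w :
  tree_rel j u v -> tree_rel j v w -> u != w -> v \in tree_hub j.
Proof.
rewrite inE; case: v => [a|b]; case: u => [a1|b1] //; case: w => [a2|b2] //=;
  rewrite ?inl_eqE ?inr_eqE ?ord_eqE /tree_edge /is_apex /=; lia.
Qed.

Lemma card_tree_hub j : #|tree_hub j| <= 2.
Proof.
rewrite leqNgt; apply/card_gt2P => -[u [v [w [[uH vH wH] [uNv vNw wNu]]]]].
move: uH vH wH uNv vNw wNu; rewrite !inE.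
case: u => [?|?]; case: v => [?|?]; case: w => [?|?];
  rewrite ?inl_eqE ?inr_eqE ?ord_eqE /is_apex /=; lia.
Qed.

Lemma tree_hub_disjoint (j l : 'I_m1) : j != l -> [disjoint tree_hub j & tree_hub l].
Proof.
rewrite -setI_eq0 ord_eqE => jNl; apply/set0Pn => -[v]; rewrite !inE.
case: v => [?|?]; rewrite ?inl_eqE ?ord_eqE /is_apex /=; lia.
Qed.

Lemma tree_rel_disjoint (j l : 'I_m1) u v : j != l -> tree_rel j u v -> ~~ tree_rel l u v.
Proof.
rewrite ord_eqE => jNl.
case: u => [?|?]; case: v => [?|?] //=; rewrite /tree_edge /is_apex; lia.
Qed.

Lemma tree_rel_vertex (j : 'I_m1) u v : tree_rel j u v -> u \in S :|: tree_hub j.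
Proof.
rewrite !inE; case: u => [?|?]; case: v => [?|?] //=;
  rewrite ?inl_eqE ?ord_eqE /tree_edge /is_apex; lia.
Qed.

Lemma apex_lt (j : 'I_m1) : s + j - 2 < m2.
Proof. have := ltn_ord j; lia. Qed.

Lemma tree_rel_connect (j : 'I_m1) v :
  v \in S :|: tree_hub j -> connect (tree_rel j) (inl j) v.
Proof.
rewrite !inE /is_apex; case: v => [a|b] /=; rewrite ?inl_eqE ?ord_eqE => vT.
- have [-> | aNj] := eqVneq a j; first exact: connect0.
  rewrite ord_eqE in aNj.
  apply: (@connect_trans _ _ (inr (Ordinal (apex_lt j)))); apply: connect1;
    rewrite /= /tree_edge /is_apex /=; lia.
- by apply: connect1; rewrite /= /tree_edge /is_apex /=; lia.
Qed.

Lemma tree_vertex_branching (j : 'I_m1) v :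
  v \in S :|: tree_hub j -> v \notin S ->
  exists u w, [/\ tree_rel j u v, tree_rel j v w & u != w].
Proof.
rewrite !inE /is_apex; case: v => [a|b] /=; rewrite ?inl_eqE ?ord_eqE => vT vNS.
- have m2_gt0 : 0 < m2 by lia.
  exists (inr (Ordinal m2_gt0)), (inr (Ordinal (apex_lt j))).
  by rewrite /= /tree_edge /is_apex inr_eqE ord_eqE /=; split; lia.
- (* x_1 if j = 0 (then i >= 2), else x_0; either way a vertex of S other than x_j *)
  have k_lt : (j == 0 :> nat) < m1 by have := ltn_ord j; lia.
  exists (inl j), (inl (Ordinal k_lt)).
  by rewrite /= /tree_edge /is_apex inl_eqE ord_eqE /=; split; lia.
Qed.

Lemma tree_steiner (j : 'I_m1) :
  steiner_tree (Kadj m1 m2) S (rel_subgr (tree_rel j) (S :|: tree_hub j)).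
Proof.
apply: (rel_subgr_steiner (tree_rel_sym j) (tree_rel_irr j) (@tree_rel_branching j)
                          (c := inl j)).
- exact: tree_rel_Kadj.
- exact: tree_rel_vertex.
- exact: subsetUl.
- by rewrite !inE eqxx orbT.
- exact: tree_rel_connect.
- exact: card_tree_hub.
- exact: tree_vertex_branching.
Qed.

Lemma tree_family_ci :
  completely_independent (Kadj m1 m2) S
    (fun j : 'I_m1 => rel_subgr (tree_rel j) (S :|: tree_hub j)).
Proof.
apply: rel_subgr_family_ci.
- exact: tree_rel_sym.
- exact: tree_rel_irr.
- exact: tree_rel_branching.
- exact: tree_steiner.
- exact: tree_hub_disjoint.
- exact: tree_rel_disjoint.
Qed.

End CompleteBipartiteTrees.

Unset Implicit Arguments.

(* The bounds s - m2 <= i and i <= m1 only make |S_i| = s. *)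
Theorem theorem3p5 (m1 m2 s i : nat) :
  2 <= m1 -> m1 <= m2 ->
  1 <= i -> s - m2 <= i -> i <= m1 -> i <= s - 1 ->
  s <= m2 - m1 + 2 ->
  kappa_star_eq (Kadj m1 m2) (S_set m1 m2 s i) m1.
Proof.
move=> m1_ge2 m1_le_m2 i_gt0 _ _ i_lt_s s_le; split.
  by eexists; exact: tree_family_ci.
have m1_gt0 : 0 < m1 by lia.
have m2_gt0 : 0 < m2 by lia.
pose x0 : KV m1 m2 := inl (Ordinal m1_gt0).
pose y0 : KV m1 m2 := inr (Ordinal m2_gt0).
have x0S : x0 \in S_set m1 m2 s i by rewrite inE /=.
have y0S : y0 \in S_set m1 m2 s i by rewrite inE /=; lia.
move=> k F /(ci_card_le_degree (@Kadj_sym m1 m2) x0S y0S isT).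
by rewrite card_Kadj_inr.
Qed.
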